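(* Consider the ADQSP protocol (context) with $\Delta_{\min}>0$ and horizon $t_{\max}\in\{1,2,\dots\}\cup\{\infty\}$, on a connected graph in which all nodes except one node $i$ are corrupt, i.e. $\mathcal{V}_c=\mathcal{V}\setminus\{i\}$ (so $\mathcal{N}_{i,h}=\emptyset$). Let the private data $S_1,\dots,S_n$ be mutually independent real random variables. Then $$\mathrm{I}(S_i;\mathcal{O})=\mathrm{I}\Big(S_i;\ \big\{S_i+c_{i,k}N_{k|i}^{(t+1)}\big\}_{k\in\mathcal{N}_i,\ 0\le t< t_{\max}}\Big),\qquad c_{i,k}=\frac{1+c\,d_i}{(1-\theta)\,2c\,B_{i|k}},$$ where $N_{k|i}^{(t+1)}$ is the quantization error of the message $\Delta\hat z_{k|i}^{(t+1)}$ sent by node $i$ to node $k$.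
   Context: Graph: $G=(\mathcal{V},\mathcal{E})$ connected undirected, $\mathcal{V}=\{1,\dots,n\}$, $\mathcal{N}_i$ neighbours of $i$, $d_i=|\mathcal{N}_i|$; for an edge $\{i,j\}$ with $i<j$, $B_{i|j}=1$, $B_{j|i}=-1$. $\mathcal{V}_c$ corrupt nodes, $\mathcal{V}_h=\mathcal{V}\setminus\mathcal{V}_c$, $\mathcal{E}_h$ edges with both endpoints honest, $\mathcal{E}_c=\mathcal{E}\setminus\mathcal{E}_h$, $\mathcal{N}_{j,h}=\mathcal{N}_j\cap\mathcal{V}_h$. ADQSP protocol: constants $c>0$, $\theta\in[0,1)$, $\sigma_z^2>0$, $\Delta^{(0)}>0$, $\gamma\in(0,1)$, $\Delta_{\min}\ge0$, and $\Delta^{(t)}=\max\{\gamma^t\Delta^{(0)},\Delta_{\min}\}$. For every ordered pair $(i,j)$ with $j\in\mathcal{N}_i$, $Z_{i|j}^{(0)}\sim\mathcal{N}(0,\sigma_z^2)$, all independent and independent of the data; both endpoints of an edge learn both initial values on it; set $\hat z^{(0)}=z^{(0)}$. For $t\ge0$ and $j\in\mathcal{N}_i$: $x_i^{(t+1)}=\big(s_i-\sum_{j\in\mathcal{N}_i}B_{i|j}\hat z_{i|j}^{(t)}\big)/(1+cd_i)$; $z_{j|i}^{(t+1)}=\theta\hat z_{j|i}^{(t)}+(1-\theta)\big(\hat z_{i|j}^{(t)}+2cB_{i|j}x_i^{(t+1)}\big)$; $\Delta z_{j|i}^{(t+1)}=z_{j|i}^{(t+1)}-\hat z_{j|i}^{(t)}$;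 $\Delta\hat z_{j|i}^{(t+1)}=\Delta z_{j|i}^{(t+1)}+N_{j|i}^{(t+1)}$ (dithered quantization); $\hat z_{j|i}^{(t+1)}=\hat z_{j|i}^{(t)}+\Delta\hat z_{j|i}^{(t+1)}$. Node $i$ sends $\Delta\hat z_{j|i}^{(t+1)}$ to $j$. The quantization errors $N_{j|i}^{(t)}$ are mutually independent, $N_{j|i}^{(t)}$ uniform on $[-\Delta^{(t)}/2,\Delta^{(t)}/2]$, and independent of the data and of $Z^{(0)}$. Iterations $t+1=1,\dots,t_{\max}$. Adversary view: $\mathcal{O}=\{S_j\}_{j\in\mathcal{V}_c}\cup\{Z_{j|k}^{(0)},Z_{k|j}^{(0)}\}_{\{j,k\}\in\mathcal{E}_c}\cup\{\Delta\hat Z_{j|k}^{(t)}: \{j,k\}\in\mathcal{E},\ 1\le t\le t_{\max}\}$ (both directions on every edge). $\mathrm{I}$ denotes mutual information. *)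

From HB Require Import structures.
From mathcomp Require Import all_boot all_order all_algebra.
From mathcomp Require Import all_classical all_reals all_analysis.
Set Implicit Arguments. Unset Strict Implicit. Unset Printing Implicit Defensive.
Import Order.TTheory GRing.Theory Num.Theory.
Local Open Scope classical_set_scope.
Local Open Scope ring_scope.

(* Mutual information between two sub-sigma-algebras F, G of the       *)
(* sample space, defined (Dobrushin / Gelfand-Yaglom-Pinsker) as the   *)
(* supremum over finite measurable partitions {A_k} of F and {B_l} of  *)
(* G of  sum_{k,l} P(A_k & B_l) ln (P(A_k & B_l)/(P(A_k)P(B_l))),      *)
(* with the convention 0 ln 0 = 0.  For random variables X, Y this is  *)
(* I(X;Y) with F = sigma(X), G = sigma(Y).                             *)
Section InfoTheory.
Context {R : realType} {d : measure_display} {Omega : measurableType d}.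
Variable P : probability Omega R.

Definition is_fpart (F : set (set Omega)) (m : nat) (A : 'I_m -> set Omega) :=
  [/\ forall k, F (A k),
      \bigcup_(k in [set: 'I_m]) A k = [set: Omega] &
      forall k l, k != l -> A k `&` A l = set0].

Definition pr (E : set Omega) : R := fine (P E).

Definition mi_term (pab pa pb : R) : R :=
  if pab == 0 then 0 else pab * ln (pab / (pa * pb)).

Definition mi_sum m m' (A : 'I_m -> set Omega) (B : 'I_m' -> set Omega) : R :=
  \sum_(k < m) \sum_(l < m') mi_term (pr (A k `&` B l)) (pr (A k)) (pr (B l)).

Definition mutual_info (F G : set (set Omega)) : \bar R :=
  ereal_sup [set x | exists m m' (A : 'I_m -> set Omega) (B : 'I_m' -> set Omega),
               [/\ is_fpart F A, is_fpart G B & x = (mi_sum A B)%:E]].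

Definition sigma_gen {I : Type} (D : set I) (X : I -> Omega -> R) : set (set Omega) :=
  <<s [set E | exists k, D k /\ exists B : set R, measurable B /\ E = X k @^-1` B] >>.

Definition sigma_rv (X : Omega -> R) : set (set Omega) :=
  sigma_gen [set: unit] (fun _ => X).

Definition mutually_independent {I : eqType} (D : set I) (X : I -> Omega -> R) :=
  forall J : seq I, uniq J -> (forall k, k \in J -> D k) ->
  forall B : I -> set R, (forall k, measurable (B k)) ->
    pr (\bigcap_(k in [set` J]) X k @^-1` B k) = \prod_(k <- J) pr (X k @^-1` B k).

End InfoTheory.

Definition simple_graph (n : nat) (adj : rel 'I_n) :=
  symmetric adj /\ irreflexive adj.

Definition connected_graph (n : nat) (adj : rel 'I_n) :=
  forall u v, connect adj u v.

Definition degree (n : nat) (adj : rel 'I_n) (i : 'I_n) : nat := #|[set k | adj i k]|.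

Definition Bsgn {R : realType} (n : nat) (i j : 'I_n) : R :=
  if (i < j)%N then 1 else -1.

(* horizon t_max : Some T (T >= 1) or None = infinity *)
Definition in_horizon (tmax : option nat) (t : nat) : bool :=
  match tmax with Some T => (t <= T)%N | None => true end.

Definition qstep {R : realType} (gamma Delta0 Deltamin : R) (t : nat) : R :=
  Num.max (gamma ^+ t * Delta0) Deltamin.

(* ADQSP recursion, as a deterministic function of the data s, the     *)
(* initial values z0 (z0 j i = z_{j|i}^(0)) and the quantization errors *)
(* nq (nq t j i = N_{j|i}^(t)).                                         *)
Section ADQSP.
Context {R : realType} (n : nat) (adj : rel 'I_n) (c theta : R).
Variables (s : 'I_n -> R) (z0 : 'I_n -> 'I_n -> R) (nq : nat -> 'I_n -> 'I_n -> R).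

Definition xnew (zh : 'I_n -> 'I_n -> R) (i : 'I_n) : R :=
  (s i - \sum_(j | adj i j) Bsgn i j * zh i j) / (1 + c * (degree adj i)%:R).

Definition znew (zh : 'I_n -> 'I_n -> R) (j i : 'I_n) : R :=
  theta * zh j i + (1 - theta) * (zh i j + 2 * c * Bsgn i j * xnew zh i).

Fixpoint zhat (t : nat) : 'I_n -> 'I_n -> R :=
  match t with
  | 0 => z0
  | t'.+1 => fun j i =>
      zhat t' j i + ((znew (zhat t') j i - zhat t' j i) + nq t'.+1 j i)
  end.

(* transmitted message Delta zhat_{j|i}^(t) (t >= 1), sent by i to j *)
Definition dzhat (t : nat) (j i : 'I_n) : R :=
  (znew (zhat t.-1) j i - zhat t.-1 j i) + nq t j i.

End ADQSP.

(* The adversary's view generates the same sigma-algebra as the noisy copies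
   [S i + c_{i,k} N_{k|i}] together with all the other primitive variables (all
   [S j], [j <> i], all [Z0], all [N_{j|k}], [k <> i]): unrolling the recursion, a
   message of [i] to [k] is a function of earlier messages plus
   [(S i + c_{i,k} N_{k|i}) / c_{i,k}], and any other message is a function of
   earlier messages, of a corrupt [S k] and of its own quantization error.  The
   other variables are independent of [S i] jointly with the noisy copies, and
   adjoining an independent sigma-algebra [G] to [F] does not change [I(A; F)]: on
   partitions into rectangles [X `&` Y] this is the log-sum inequality plus the
   product rule, and any finite partition of [F \/ G] is approximated in symmetric
   difference by partitions into unions of rectangles, along which the partition
   sums converge since [x ln x] is continuous at [0]. *)

From HB Require Import structures.
From mathcomp Require Import all_boot all_order all_algebra.
From mathcomp Require Import all_classical all_reals all_analysis.
From mathcomp Require Import measurable_realfun.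
From mathcomp Require Import ring lra.
Set Implicit Arguments. Unset Strict Implicit. Unset Printing Implicit Defensive.
Import Order.TTheory GRing.Theory Num.Theory.
Import numFieldNormedType.Exports.
Local Open Scope classical_set_scope.
Local Open Scope ring_scope.

Section finite_partition.
Context {T : Type}.

Definition finpart (S : set (set T)) (K : finType) (f : K -> set T) :=
  [/\ forall k, S (f k), forall w, exists k, f k w &
      forall a b, a != b -> f a `&` f b = set0].

Definition meet_part (I J : finType) (f : I -> set T) (g : J -> set T) :=
  fun p : I * J => f p.1 `&` g p.2.

Definition refines (K L : finType) (f : K -> set T) (g : L -> set T) :=
  forall k, exists l, f k `<=` g l.

Lemma finpart_sub (S S' : set (set T)) (K : finType) (f : K -> set T) :
  S `<=` S' -> finpart S f -> finpart S' f.
Proof. by move=> SS' [Sf cov dis]; split => // k; apply: SS'. Qed.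

Lemma finpart_unit (S : set (set T)) : S setT -> finpart S (fun _ : unit => setT).
Proof. by move=> ST; split => // [w|[] [] //]; exists tt. Qed.

Lemma finpart_bool (S : set (set T)) X : S X -> S (~` X) ->
  finpart S (fun b : bool => if b then X else ~` X).
Proof.
move=> SX SC; split; first by case.
- by move=> w; case: (pselect (X w)) => h; [exists true|exists false].
- by case; case => //= _; rewrite ?setICr ?setICl.
Qed.

Lemma finpart_meet (S : set (set T)) (I J : finType) (f : I -> set T) (g : J -> set T) :
  setI_closed S -> finpart S f -> finpart S g -> finpart S (meet_part f g).
Proof.
move=> SI [Sf cf df] [Sg cg dg]; split.
- by move=> p; apply: SI.
- by move=> w; have [a fa] := cf w; have [b gb] := cg w; exists (a, b).
- move=> [a1 a2] [b1 b2]; rewrite xpair_eqE negb_and => /orP [h|h].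
    by rewrite /meet_part /= setIACA df // set0I.
  by rewrite /meet_part /= setIACA dg // setI0.
Qed.

Lemma refines_meet (I1 I2 J1 J2 : finType) (f1 : I1 -> set T) (f2 : I2 -> set T)
    (g1 : J1 -> set T) (g2 : J2 -> set T) :
  refines (meet_part (meet_part f1 f2) (meet_part g1 g2)) (meet_part f1 g1) /\
  refines (meet_part (meet_part f1 f2) (meet_part g1 g2)) (meet_part f2 g2).
Proof.
by split => -[[i1 i2] [j1 j2]]; [exists (i1, j1)|exists (i2, j2)];
  rewrite /meet_part /= => w [[? ?] [? ?]].
Qed.

Definition saturated (K : finType) (h : K -> set T) (E : set T) :=
  forall k, h k `<=` E \/ h k `<=` ~` E.

Section saturated.
Variables (K : finType) (h : K -> set T).

Lemma saturated0 : saturated h set0.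
Proof. by move=> k; right; rewrite setC0. Qed.

Lemma saturatedC E : saturated h E -> saturated h (~` E).
Proof. by move=> hE k; case: (hE k) => H; [right; rewrite setCK|left]. Qed.

Lemma saturatedU E1 E2 : saturated h E1 -> saturated h E2 -> saturated h (E1 `|` E2).
Proof.
move=> h1 h2 k; case: (h1 k) => H1; first by left; apply: subset_trans H1 _.
case: (h2 k) => H2; first by left; apply: subset_trans H2 _.
by right; rewrite setCU => w hw; split; [apply: H1|apply: H2].
Qed.

Lemma saturatedI E1 E2 : saturated h E1 -> saturated h E2 -> saturated h (E1 `&` E2).
Proof.
move=> h1 h2; rewrite -(setCK (E1 `&` E2)) setCI.
by apply/saturatedC/saturatedU; apply: saturatedC.
Qed.

Lemma saturatedD E1 E2 : saturated h E1 -> saturated h E2 -> saturated h (E1 `\` E2).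
Proof. by move=> h1 h2; rewrite setDE; apply/saturatedI/saturatedC. Qed.

Lemma saturated_big (I : Type) (s : seq I) (Q : pred I) (E : I -> set T) :
  (forall i, Q i -> saturated h (E i)) ->
  saturated h (\big[setU/set0]_(i <- s | Q i) E i).
Proof. by move=> hE; apply: big_ind => //; [exact: saturated0|exact: saturatedU]. Qed.

Lemma saturated_refine (L : finType) (h' : L -> set T) E :
  refines h' h -> saturated h E -> saturated h' E.
Proof.
move=> ref hE l; have [k h'h] := ref l.
by case: (hE k) => H; [left|right]; apply: subset_trans H.
Qed.

End saturated.

Lemma bigsetU_memP (K : finType) (Q : pred K) (F : K -> set T) w :
  (\big[setU/set0]_(k | Q k) F k) w <-> exists k, Q k /\ F k w.
Proof.
rewrite big_mkcond -bigcup_seq; split; first by move=> [k _]; case: ifP => // Qk; exists k.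
by move=> [k [Qk Fk]]; exists k; [rewrite /= mem_index_enum|rewrite Qk].
Qed.

Lemma saturated_bigsetU (K : finType) (h : K -> set T) E :
  (forall w, exists k, h k w) -> saturated h E ->
  E = \big[setU/set0]_(k | `[< h k `<=` E >]) h k.
Proof.
move=> cov hE; apply/seteqP; split => w; last first.
  by move=> /bigsetU_memP [k [/asboolP hkE hkw]]; exact: hkE.
move=> Ew; apply/bigsetU_memP; have [k hk] := cov w; exists k; split => //.
by apply/asboolP; case: (hE k) => // H; have := H w hk.
Qed.

End finite_partition.

Section pr_lemmas.
Context {R : realType} {d : measure_display} {Omega : measurableType d}.
Variable P : probability Omega R.
Implicit Types E A B : set Omega.

Lemma prE E : measurable E -> P E = (pr P E)%:E.
Proof. by move=> mE; rewrite /pr fineK // fin_num_measure. Qed.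

Lemma pr_ge0 E : 0 <= pr P E.
Proof. exact/fine_ge0/measure_ge0. Qed.

Lemma pr_le1 E : measurable E -> pr P E <= 1.
Proof. by move=> mE; rewrite -lee_fin -prE // probability_le1. Qed.

Lemma prT : pr P setT = 1.
Proof. by rewrite /pr probability_setT. Qed.

Lemma pr0 : pr P set0 = 0.
Proof. by rewrite /pr measure0. Qed.

Lemma le_pr A B : measurable A -> measurable B -> A `<=` B -> pr P A <= pr P B.
Proof.
by move=> mA mB AB; rewrite -lee_fin -!prE //; apply: le_measure => //; rewrite inE.
Qed.

Lemma pr_setU A B : measurable A -> measurable B -> A `&` B = set0 ->
  pr P (A `|` B) = pr P A + pr P B.
Proof.
move=> mA mB AB; apply/eqP; rewrite -eqe EFinD -!prE //; last exact: measurableU.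
by rewrite measureU.
Qed.

Lemma pr_setU_le A B : measurable A -> measurable B -> pr P (A `|` B) <= pr P A + pr P B.
Proof.
move=> mA mB; rewrite -lee_fin EFinD -!prE //; last exact: measurableU.
exact: measureU2.
Qed.

Lemma pr_setID A B : measurable A -> measurable B ->
  pr P A = pr P (A `&` B) + pr P (A `\` B).
Proof.
move=> mA mB; rewrite -pr_setU; first by rewrite setUIDK.
- exact: measurableI.
- exact: measurableD.
- by rewrite setDE setIACA setICr setI0.
Qed.

Lemma pr_setY_dist A B : measurable A -> measurable B ->
  `|pr P A - pr P B| <= pr P (A `+` B).
Proof.
move=> mA mB; have mY : measurable (A `+` B) by apply: measurableU; apply: measurableD.
have le_setY C D : measurable C -> measurable D -> pr P C <= pr P D + pr P (C `+` D).
  move=> mC mD; apply: le_trans (pr_setU_le mD _); last by apply: measurableU; apply: measurableD.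
  apply: le_pr => //; first by apply: measurableU => //; apply: measurableU; apply: measurableD.
  by move=> w Cw; case: (pselect (D w)) => Dw; [left|right; left].
have := le_setY _ _ mA mB; have := le_setY _ _ mB mA; rewrite setYC.
by rewrite ler_norml => h1 h2; apply/andP; split; lra.
Qed.

Lemma pr_bigsetU (K : eqType) (s : seq K) (f : K -> set Omega) :
  uniq s -> (forall k, measurable (f k)) ->
  (forall a b, a != b -> f a `&` f b = set0) ->
  pr P (\big[setU/set0]_(k <- s) f k) = \sum_(k <- s) pr P (f k).
Proof.
move=> + mf dis; elim: s => [|a s IH]; first by rewrite !big_nil pr0.
move=> /= /andP [as_ us]; rewrite !big_cons pr_setU ?IH //.
- exact: bigsetU_measurable.
- rewrite big_distrr /= big1_seq // => b /andP [_ bs]; apply: dis.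
  by apply: contraNneq as_ => ->.
Qed.

Lemma pr_bigsetU_le (N : nat) (X : 'I_N -> set Omega) : (forall k, measurable (X k)) ->
  pr P (\big[setU/set0]_(k < N) X k) <= \sum_(k < N) pr P (X k).
Proof.
elim: N X => [X _|N IH X mX]; first by rewrite !big_ord0 pr0.
rewrite !big_ord_recr /=; apply: le_trans (pr_setU_le _ (mX _)) _.
  exact: bigsetU_measurable.
by rewrite lerD2r; apply: IH.
Qed.

Lemma pr_finpart (K : finType) (f : K -> set Omega) X :
  finpart measurable f -> measurable X -> pr P X = \sum_k pr P (X `&` f k).
Proof.
move=> [mf cov dis] mX; rewrite -pr_bigsetU ?index_enum_uniq //; last 2 first.
- by move=> k; apply: measurableI.
- by move=> a b ab; rewrite setIACA dis // setI0.
congr (pr P _); rewrite -big_distrr /= -bigcup_seq; apply/esym/setIidl => w _.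
by have [k fk] := cov w; exists k => //=; rewrite mem_index_enum.
Qed.

Lemma pr_nondecreasing_cvg (F : nat -> set Omega) : (forall n, measurable (F n)) ->
  {homo F : a b / (a <= b)%N >-> (a <= b)%O} ->
  pr P (F n) @[n --> \oo] --> pr P (\bigcup_n F n).
Proof.
move=> mF nd; have mU : measurable (\bigcup_n F n) by apply: bigcup_measurable.
have : P (F n) @[n --> \oo] --> P (\bigcup_n F n) by exact: nondecreasing_cvg_mu.
by rewrite (prE mU); exact: fine_cvg.
Qed.

End pr_lemmas.

Section log_sum.
Context {R : realType}.

Definition klterm (x z : R) : R := if x == 0 then 0 else x * ln (x / z).

Lemma mi_termE (x a y : R) : mi_term x a y = klterm x (a * y).
Proof. by []. Qed.

Lemma klterm_scale (x z p : R) : 0 <= p -> klterm (x * p) (z * p) = p * klterm x z.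
Proof.
rewrite le_eqVlt => /orP [/eqP <-|p0]; first by rewrite /klterm mulr0 eqxx mul0r.
rewrite /klterm mulf_eq0 (gt_eqF p0) orbF; case: ifP => _; first by rewrite mulr0.
by rewrite -mulf_div divff ?(gt_eqF p0) // mulr1 mulrAC mulrC.
Qed.

(* [ln u <= u - 1] applied at [u = z X / (x Z)]. *)
Lemma klterm_ge (x z X Z : R) : 0 <= x -> 0 <= z -> (0 < x -> 0 < z) ->
  0 < X -> 0 < Z -> x * ln (X / Z) + x - z * X / Z <= klterm x z.
Proof.
move=> x0 z0 xz X0 Z0; rewrite /klterm; case: (eqVneq x 0) => [->|xn0].
  have : 0 <= z * X / Z by rewrite divr_ge0 ?mulr_ge0 // ltW.
  by rewrite mul0r; lra.
have xp : 0 < x by rewrite lt_def xn0.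
have zp := xz xp.
set u := z * X / (x * Z).
have up : 0 < u by rewrite /u divr_gt0 ?mulr_gt0.
have lnu : ln u <= u - 1.
  by have := @le_ln1Dx R (u - 1); rewrite [1 + _]addrC subrK; apply; lra.
have -> : ln (x / z) = ln (X / Z) - ln u.
  rewrite /u -ln_div ?posrE ?divr_gt0 ?mulr_gt0 //; congr ln.
  by field; rewrite !gt_eqF.
have : x * ln u <= x * (u - 1) by rewrite ler_pM2l.
have -> : x * (u - 1) = z * X / Z - x by rewrite /u; field; rewrite !gt_eqF.
by rewrite mulrBr; lra.
Qed.

Lemma log_sum_le (K : finType) (Q : pred K) (x z : K -> R) :
  (forall k, 0 <= x k) -> (forall k, 0 <= z k) -> (forall k, 0 < x k -> 0 < z k) ->
  klterm (\sum_(k | Q k) x k) (\sum_(k | Q k) z k) <= \sum_(k | Q k) klterm (x k) (z k).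
Proof.
move=> x0 z0 xz; set X := \sum_(k | Q k) x k; set Z := \sum_(k | Q k) z k.
have X0 : 0 <= X by apply: sumr_ge0.
case: (eqVneq X 0) => [XE|Xn0].
  rewrite /klterm XE eqxx big1 // => k Qk.
  by rewrite (psumr_eq0P (fun k _ => x0 k) XE) // eqxx.
have Xp : 0 < X by rewrite lt_def Xn0.
have [k0 Qk0 xk0] : exists2 k, Q k & 0 < x k.
  apply: contrapT => H; move/eqP: Xn0; apply; apply: big1 => k Qk; apply/eqP.
  by rewrite eq_le x0 andbT leNgt; apply/negP => xk; apply: H; exists k.
have Zp : 0 < Z.
  by apply: lt_le_trans (xz _ xk0) _; rewrite /Z (bigD1 k0) //= lerDl sumr_ge0.
apply: le_trans (ler_sum _ (fun k _ => klterm_ge (x0 k) (z0 k) (@xz k) Xp Zp)).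
rewrite !big_split /= sumrN -!big_distrl /= -/X -/Z.
have -> : Z * X / Z = X by field; rewrite gt_eqF.
by rewrite /klterm (gt_eqF Xp) addrK.
Qed.

End log_sum.

Section mi_sum_partitions.
Context {R : realType} {d : measure_display} {Omega : measurableType d}.
Variable P : probability Omega R.
Variables (m : nat) (A : 'I_m -> set Omega).
Hypothesis mA : forall k, measurable (A k).

Definition mi_sumT (K : finType) (B : K -> set Omega) : R :=
  \sum_(k < m) \sum_(l : K) mi_term (pr P (A k `&` B l)) (pr P (A k)) (pr P (B l)).

Lemma mi_sumT_refine (K L : finType) (C : K -> set Omega) (B : L -> set Omega) :
  finpart measurable C -> finpart measurable B -> refines C B -> mi_sumT B <= mi_sumT C.
Proof.
move=> pC pB /choice [g hg]; have [mC _ _] := pC; have [mB _ disB] := pB.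
have prB X : measurable X -> forall l,
    pr P (X `&` B l) = \sum_(c | g c == l) pr P (X `&` C c).
  move=> mX l; rewrite (pr_finpart P pC (measurableI _ _ mX (mB l))) [RHS]big_mkcond /=.
  apply: eq_bigr => c _; case: eqP => [<-|ne].
    by rewrite -setIA (setIidr (hg c)).
  rewrite -(pr0 P); congr (pr P _); apply/seteqP; split => // w [[_ Bw] Cw].
  by rewrite -(disB l (g c)); [split => //; exact: hg|apply/eqP => E; apply: ne].
apply: ler_sum => k _; rewrite (partition_big g xpredT) //=; apply: ler_sum => l _.
rewrite prB // -(setTI (B l)) prB // mi_termE mulr_sumr.
under [in X in _ <= X]eq_bigr => c _ do rewrite mi_termE.
under [in X in klterm _ X]eq_bigr => c _ do rewrite setTI.
have mAC c : measurable (A k `&` C c) by apply: measurableI.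
apply: log_sum_le => [c|c|c xp]; first exact: pr_ge0.
  by apply: mulr_ge0; apply: pr_ge0.
by apply: mulr_gt0; apply: lt_le_trans xp _; apply: le_pr.
Qed.

Lemma mi_sumT_meet_indep (I J : finType) (f : I -> set Omega) (g : J -> set Omega) :
  finpart measurable g ->
  (forall k i j, pr P (A k `&` (f i `&` g j)) = pr P (A k `&` f i) * pr P (g j)) ->
  (forall i j, pr P (f i `&` g j) = pr P (f i) * pr P (g j)) ->
  mi_sumT (meet_part f g) = mi_sumT f.
Proof.
move=> pg hA hF; apply: eq_bigr => k _.
rewrite -(pair_big xpredT xpredT (fun i j =>
  mi_term (pr P (A k `&` (f i `&` g j))) (pr P (A k)) (pr P (f i `&` g j)))) /=.
apply: eq_bigr => i _.
under eq_bigr => j _ do rewrite hA hF !mi_termE mulrA klterm_scale ?pr_ge0 //.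
rewrite -big_distrl /=.
have -> : \sum_j pr P (g j) = 1.
  by rewrite -(prT P) (pr_finpart P pg measurableT); apply: eq_bigr => j _; rewrite setTI.
by rewrite mul1r.
Qed.

Lemma mi_sumT_le_mutual_info (A0 F : set (set Omega)) (K : finType) (f : K -> set Omega) :
  is_fpart A0 A -> finpart F f -> ((mi_sumT f)%:E <= mutual_info P A0 F)%E.
Proof.
move=> pA [Ff cov dis]; pose f' (r : 'I_#|K|) := f (enum_val r).
have -> : mi_sumT f = mi_sum P A f'.
  apply: eq_bigr => k _; rewrite (reindex (enum_val : 'I_#|K| -> K)) //.
  exact: onW_bij (enum_val_bij K).
apply: ereal_sup_ubound; exists m, #|K|, A, f'; split => //; split.
- by move=> r; apply: Ff.
- apply/seteqP; split => // w _; have [k fk] := cov w.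
  by exists (enum_rank k) => //; rewrite /f' enum_rankK.
- by move=> a b ab; apply: dis; apply: contra ab => /eqP /enum_val_inj ->.
Qed.

End mi_sum_partitions.

Section generated_sigma_algebra.
Context {T : pointedType} (G : set (set T)).

Lemma g_sigmaT : <<s G >> setT.
Proof. exact: (@measurableT _ (g_sigma_algebraType G)). Qed.

Lemma g_sigmaC A : <<s G >> A -> <<s G >> (~` A).
Proof. exact: (@measurableC _ (g_sigma_algebraType G)). Qed.

Lemma g_sigmaI : setI_closed <<s G >>.
Proof. exact: (@measurableI _ (g_sigma_algebraType G)). Qed.

End generated_sigma_algebra.

Lemma bigsetU_setY_sub {T : Type} (N : nat) (E E' : 'I_N -> set T) :
  (\big[setU/set0]_(k < N) E k) `+` (\big[setU/set0]_(k < N) E' k) `<=`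
  \big[setU/set0]_(k < N) (E k `+` E' k).
Proof.
move=> w [[/bigsetU_memP [k [_ Ew]] nE'w]|[/bigsetU_memP [k [_ E'w]] nEw]];
  apply/bigsetU_memP; exists k; split => //.
  by left; split => // E'kw; apply: nE'w; apply/bigsetU_memP; exists k.
by right; split => // Ekw; apply: nEw; apply/bigsetU_memP; exists k.
Qed.

Section rect_approximation.
Context {R : realType} {d : measure_display} {Omega : measurableType d}.
Variable P : probability Omega R.
Variables (F0 G0 : set (set Omega)).
Hypothesis FM : <<s F0 >> `<=` measurable.
Hypothesis GM : <<s G0 >> `<=` measurable.

(* The algebra generated by the rectangles [X `&` Y], [X] in [<<s F0 >>], [Y] in [<<s G0 >>]. *)
Definition rect_alg (E : set Omega) :=
  exists (I J : finType) (f : I -> set Omega) (g : J -> set Omega),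
    [/\ finpart <<s F0 >> f, finpart <<s G0 >> g & saturated (meet_part f g) E].

Lemma finpart_measurable_meet (I J : finType) (f : I -> set Omega) (g : J -> set Omega) :
  finpart <<s F0 >> f -> finpart <<s G0 >> g -> finpart measurable (meet_part f g).
Proof.
move=> pf pg; apply: finpart_meet; first exact: measurableI.
  exact: finpart_sub pf.
exact: finpart_sub pg.
Qed.

Lemma rect_alg_measurable E : rect_alg E -> measurable E.
Proof.
move=> [I [J [f [g [pf pg sE]]]]].
have [mfg cov _] := finpart_measurable_meet pf pg.
by rewrite (saturated_bigsetU cov sE); apply: bigsetU_measurable.
Qed.

Lemma rect_algC E : rect_alg E -> rect_alg (~` E).
Proof.
by move=> [I [J [f [g [pf pg sE]]]]]; exists I, J, f, g; split => //; exact: saturatedC.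
Qed.

Lemma rect_algF X : <<s F0 >> X -> rect_alg X.
Proof.
move=> FX; exists bool, unit, (fun b => if b then X else ~` X), (fun=> setT); split.
- by apply: finpart_bool => //; apply: g_sigmaC.
- by apply: finpart_unit; apply: g_sigmaT.
- by move=> [[] []]; [left|right]; apply: subIsetl.
Qed.

Lemma rect_algG Y : <<s G0 >> Y -> rect_alg Y.
Proof.
move=> GY; exists unit, bool, (fun=> setT), (fun b => if b then Y else ~` Y); split.
- by apply: finpart_unit; apply: g_sigmaT.
- by apply: finpart_bool => //; apply: g_sigmaC.
- by move=> [[] []]; [left|right]; apply: subIsetr.
Qed.

Lemma rect_alg_frame (s : seq (set Omega)) : {in s, forall E, rect_alg E} ->
  exists (I J : finType) (f : I -> set Omega) (g : J -> set Omega),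
    [/\ finpart <<s F0 >> f, finpart <<s G0 >> g &
        {in s, forall E, saturated (meet_part f g) E}].
Proof.
elim: s => [_|E s IH hs].
  exists unit, unit, (fun=> setT), (fun=> setT).
  by split => //; apply: finpart_unit; apply: g_sigmaT.
have [|I1 [J1 [f1 [g1 [pf1 pg1 s1]]]]] := IH.
  by move=> E' E's; apply: hs; rewrite inE E's orbT.
have [I2 [J2 [f2 [g2 [pf2 pg2 s2]]]]] := hs E (mem_head _ _).
have [r1 r2] := refines_meet f1 f2 g1 g2.
exists (I1 * I2)%type, (J1 * J2)%type, (meet_part f1 f2), (meet_part g1 g2); split.
- by apply: finpart_meet => //; exact: g_sigmaI.
- by apply: finpart_meet => //; exact: g_sigmaI.
- move=> E'; rewrite inE => /orP [/eqP ->|E's]; first exact: saturated_refine r2 s2.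
  by apply: saturated_refine r1 _; apply: s1.
Qed.

Lemma rect_alg_bigsetU (N : nat) (E : 'I_N -> set Omega) :
  (forall k, rect_alg (E k)) -> rect_alg (\big[setU/set0]_(k < N) E k).
Proof.
move=> hE; have [|I [J [f [g [pf pg sE]]]]] := @rect_alg_frame [seq E k | k <- enum 'I_N].
  by move=> _ /mapP [k _ ->].
exists I, J, f, g; split => //; apply: saturated_big => k _.
by apply: sE; apply: map_f; rewrite mem_enum.
Qed.

Definition rect_approx (E : set Omega) := measurable E /\
  forall e, 0 < e -> exists2 E', rect_alg E' & pr P (E `+` E') <= e.

Lemma rect_approx_alg E : rect_alg E -> rect_approx E.
Proof.
move=> hE; split => [|e e0]; first exact: rect_alg_measurable.
by exists E => //; rewrite setYK pr0 ltW.
Qed.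

Lemma rect_approxC E : rect_approx E -> rect_approx (~` E).
Proof.
move=> [mE hE]; split => [|e /hE [E' aE' le]]; first exact: measurableC.
exists (~` E'); first exact: rect_algC.
by rewrite /setY !setDE !setCK setUC [X in _ `|` X]setIC [X in X `|` _]setIC.
Qed.

Lemma rect_approx_bigsetU (N : nat) (E : 'I_N -> set Omega) :
  (forall k, rect_approx (E k)) -> rect_approx (\big[setU/set0]_(k < N) E k).
Proof.
move=> hE; split => [|e e0]; first by apply: bigsetU_measurable => k _; case: (hE k).
have eN0 : 0 < e / N.+1%:R by rewrite divr_gt0.
have /choice [E' hE'] k : exists E', rect_alg E' /\ pr P (E k `+` E') <= e / N.+1%:R.
  by have [_ /(_ _ eN0) [E' ? ?]] := hE k; exists E'.
exists (\big[setU/set0]_(k < N) E' k); first by apply: rect_alg_bigsetU => k; case: (hE' k).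
have mE k : measurable (E k) by case: (hE k).
have mE' k : measurable (E' k) by apply: rect_alg_measurable; case: (hE' k).
have mY k : measurable (E k `+` E' k) by apply: measurableU; apply: measurableD.
have mUY : measurable ((\big[setU/set0]_(k < N) E k) `+` \big[setU/set0]_(k < N) E' k).
  by apply: measurableU; apply: measurableD; apply: bigsetU_measurable.
have mUY' : measurable (\big[setU/set0]_(k < N) (E k `+` E' k)).
  exact: bigsetU_measurable.
apply: le_trans (le_pr P mUY mUY' (@bigsetU_setY_sub _ _ E E')) _.
apply: le_trans (pr_bigsetU_le P mY) _.
apply: le_trans (ler_sum _ (fun k _ => (hE' k).2)) _.
by rewrite sumr_const card_ord -[_ *+ N]mulr_natr mulrAC ler_pdivrMr ?ltr0n // ler_pM2l // ler_nat.
Qed.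

Lemma rect_approx_bigcup (E : nat -> set Omega) :
  (forall n, rect_approx (E n)) -> rect_approx (\bigcup_n E n).
Proof.
move=> hE; have mE n : measurable (E n) by case: (hE n).
set U := \bigcup_n E n; have mU : measurable U by apply: bigcup_measurable.
split => // e e0.
pose S k := \big[setU/set0]_(n < k.+1) E n.
have mS k : measurable (S k) by apply: bigsetU_measurable.
have SU k : S k `<=` U by move=> w /bigsetU_memP [n [_ Ew]]; exists n.
have cvS : pr P (S k) @[k --> \oo] --> pr P U.
  rewrite /U -bigcup_bigsetU_bigcup; apply: pr_nondecreasing_cvg => // a b ab.
  apply/subsetPset => w /bigsetU_memP [n [_ Ew]]; apply/bigsetU_memP.
  by exists (widen_ord (ab : a.+1 <= b.+1)%N n).
have e2 : 0 < e / 2 by rewrite divr_gt0.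
have [k hk] : exists k, pr P U - pr P (S k) <= e / 2.
  have [N _ HN] := cvgr_dist_lt _ _ cvS _ e2.
  by exists N; apply/ltW/le_lt_trans/(HN N (leqnn N)); exact: ler_norm.
have [_ /(_ _ e2) [E' aE' hE']] := rect_approx_bigsetU (fun n : 'I_k.+1 => hE n).
have mE' := rect_alg_measurable aE'.
have mUS : measurable (U `\` S k) by apply: measurableD.
have mSY : measurable (S k `+` E') by apply: measurableU; apply: measurableD.
exists E' => //.
have sub : U `+` E' `<=` (U `\` S k) `|` (S k `+` E').
  move=> w [[Uw nE'w]|[E'w nUw]]; last by right; right; split => // /SU.
  by case: (pselect (S k w)) => Sw; [right; left|left].
apply: le_trans (le_pr P _ (measurableU _ _ mUS mSY) sub) _.
  by apply: measurableU; apply: measurableD.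
apply: le_trans (pr_setU_le P mUS mSY) _.
have -> : pr P (U `\` S k) = pr P U - pr P (S k).
  by rewrite (pr_setID P mU (mS k)) setIidr // addrC addKr.
rewrite /S in hE' *; lra.
Qed.

Lemma rect_approx_sigma : sigma_algebra setT rect_approx.
Proof.
split.
- by apply/rect_approx_alg/rect_algF; exact: sigma_algebra0.
- by move=> A hA; rewrite setTD; apply: rect_approxC.
- exact: rect_approx_bigcup.
Qed.

Lemma rect_approx_gen X : <<s (<<s F0 >> `|` <<s G0 >>) >> X -> rect_approx X.
Proof.
apply: smallest_sub; first exact: rect_approx_sigma.
by move=> Y [FY|GY]; apply: rect_approx_alg; [apply: rect_algF|apply: rect_algG].
Qed.

End rect_approximation.

Section mi_term_continuity.
Context {R : realType}.

Lemma xlnx_ge (x : R) : 0 < x -> - (x * ln x) <= 2 * Num.sqrt x.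
Proof.
move=> x0; set s := Num.sqrt x; have s0 : 0 < s by rewrite sqrtr_gt0.
have xs : x = s ^+ 2 by rewrite sqr_sqrtr // ltW.
have : ln s^-1 < s^-1 by apply: ln_sublinear; rewrite invr_gt0.
rewrite lnV ?posrE // => lns.
have -> : - (x * ln x) = 2 * s * (s * - ln s).
  by rewrite xs lnXn // -mulr_natl; ring.
have : s * - ln s <= s * s^-1 by rewrite ler_pM2l // ltW.
rewrite mulfV ?gt_eqF // => le1.
by rewrite -[X in _ <= X]mulr1 ler_pM2l // mulr_gt0.
Qed.

Lemma mi_term_bound (x a y : R) : 0 <= x -> x <= y -> y <= 1 -> x <= a -> a <= 1 ->
  `|mi_term x a y| <= 4 * Num.sqrt x.
Proof.
move=> x0 xy y1 xa a1; rewrite /mi_term.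
case: eqP => [_|/eqP xn0]; first by rewrite normr0 mulr_ge0 // sqrtr_ge0.
have xp : 0 < x by rewrite lt_def xn0.
have ap : 0 < a by apply: lt_le_trans xa.
have yp : 0 < y by apply: lt_le_trans xy.
rewrite ln_div ?posrE ?mulr_gt0 // lnM ?posrE //.
have la : ln x <= ln a by rewrite ler_ln ?posrE.
have ly : ln x <= ln y by rewrite ler_ln ?posrE.
have la0 : ln a <= 0 by apply: ln_le0.
have ly0 : ln y <= 0 by apply: ln_le0.
have lx0 : ln x <= 0 by apply: ln_le0; lra.
have hb := xlnx_ge xp.
have lo : x * ln x <= x * (ln x - (ln a + ln y)) by rewrite ler_pM2l //; lra.
have hi : x * (ln x - (ln a + ln y)) <= 2 * - (x * ln x).
  by rewrite (_ : 2 * _ = x * (- 2 * ln x)); [rewrite ler_pM2l //; lra|ring].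
have : 0 <= - (x * ln x) by rewrite -mulrN mulr_ge0 // oppr_ge0.
by rewrite ler_norml; lra.
Qed.

Variables (xn yn : nat -> R) (x y a : R).
Hypotheses (cx : xn n @[n --> \oo] --> x) (cy : yn n @[n --> \oo] --> y).
Hypotheses (xn0 : forall n, 0 <= xn n) (xnyn : forall n, xn n <= yn n).
Hypotheses (yn1 : forall n, yn n <= 1) (xna : forall n, xn n <= a) (a1 : a <= 1).

(* Near [x = 0] continuity follows from the bound [4 sqrt x], elsewhere from that of [ln]. *)
Lemma mi_term_cvg : x <= y -> x <= a ->
  mi_term (xn n) a (yn n) @[n --> \oo] --> mi_term x a y.
Proof.
move=> xy xa; have x0 : 0 <= x by apply: (closed_cvg _ (@closed_ge _ 0) _ _ cx); exact: nearW.
case: (eqVneq x 0) => [x00|xnz].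
  subst x; rewrite /mi_term eqxx.
  have cs : 4 * Num.sqrt (xn n) @[n --> \oo] --> (0 : R).
    rewrite -(mulr0 4) -sqrtr0; apply: cvgMr.
    exact: (continuous_cvg _ (@sqrt_continuous R 0)) cx.
  apply: (@squeeze_cvgr _ _ _ _ (fun n => - (4 * Num.sqrt (xn n))) (fun n => 4 * Num.sqrt (xn n))).
  - apply: nearW => n; have := mi_term_bound (xn0 n) (xnyn n) (yn1 n) (xna n) a1.
    by rewrite ler_norml.
  - by rewrite -oppr0; apply: cvgN.
  - exact: cs.
have xp : 0 < x by rewrite lt_def xnz.
have ap : 0 < a by apply: lt_le_trans xa.
have yp : 0 < y by apply: lt_le_trans xy.
have ev : \forall n \near \oo, xn n * ln (xn n / (a * yn n)) = mi_term (xn n) a (yn n).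
  apply: filterS (cvgr_dist_lt _ _ cx _ xp) => n hn.
  by rewrite /mi_term gt_eqF //; have := ler_norm (x - xn n); lra.
apply: cvg_trans (near_eq_cvg ev) _; rewrite /mi_term (gt_eqF xp).
apply: cvgM => //; apply: (continuous_cvg _ (@continuous_ln R _ _)); last first.
  by apply: cvgM => //; apply: cvgV; [rewrite mulf_neq0 ?gt_eqF|apply: cvgMr].
by rewrite divr_gt0 ?mulr_gt0.
Qed.

End mi_term_continuity.

Lemma cvg_dist_le_harmonic {R : realType} (u : nat -> R) (v c : R) :
  (forall n, `|v - u n| <= c / n.+1%:R) -> u n @[n --> \oo] --> v.
Proof.
move=> h; have ch : c / n.+1%:R @[n --> \oo] --> (0 : R).
  by rewrite -(mulr0 c); apply: cvgMr; exact: cvg_harmonic.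
apply: (@squeeze_cvgr _ _ _ _ (fun n => v - c / n.+1%:R) (fun n => v + c / n.+1%:R)).
- apply: nearW => n; have := h n; rewrite ler_norml.
  by move: (c / _) => t /andP [h1 h2]; apply/andP; split; lra.
- by rewrite -[X in _ --> X]subr0; apply: cvgB => //; apply: cvg_cst.
- by rewrite -[X in _ --> X]addr0; apply: cvgD => //; apply: cvg_cst.
Qed.

Lemma mi_sumT_cvg {R : realType} {d : measure_display} {Omega : measurableType d}
    (P : probability Omega R) (m : nat) (A : 'I_m -> set Omega) (K : finType)
    (B : K -> set Omega) (Bs : nat -> K -> set Omega) (c : R) :
  (forall k, measurable (A k)) -> (forall l, measurable (B l)) ->
  (forall n l, measurable (Bs n l)) ->
  (forall n X l, measurable X -> `|pr P (X `&` B l) - pr P (X `&` Bs n l)| <= c / n.+1%:R) ->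
  mi_sumT P A (Bs n) @[n --> \oo] --> mi_sumT P A B.
Proof.
move=> mA mB mBs close.
rewrite /mi_sumT; apply: cvg_big => [|k _]; first exact: add_continuous.
apply: cvg_big => [|l _]; first exact: add_continuous.
have mAB : measurable (A k `&` B l) by apply: measurableI.
apply: mi_term_cvg.
- by apply: cvg_dist_le_harmonic => n; apply: close.
- by apply: (@cvg_dist_le_harmonic _ _ _ c) => n; have := close n _ l measurableT; rewrite !setTI.
- by move=> n; apply: pr_ge0.
- by move=> n; apply: le_pr => //; apply: measurableI.
- by move=> n; apply: pr_le1.
- by move=> n; apply: le_pr => //; apply: measurableI.
- exact: pr_le1.
- exact: le_pr.
- exact: le_pr.
Qed.

Section disjointify.
Context {T : Type} (m : nat) (E : 'I_m.+1 -> set T).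

Definition exclusive l := E l `\` \big[setU/set0]_(l'' | l'' != l) E l''.

Definition disjointify l :=
  if l == ord0 then ~` \big[setU/set0]_(l' | l' != ord0) exclusive l' else exclusive l.

Lemma exclusiveP l w : exclusive l w <-> E l w /\ forall l'', l'' != l -> ~ E l'' w.
Proof.
split => [[El nE]|[El h]].
  by split => // l'' ne El''; apply: nE; apply/bigsetU_memP; exists l''.
by split => // /bigsetU_memP [l'' [ne El'']]; exact: h ne El''.
Qed.

Lemma saturated_disjointify (K : finType) (h : K -> set T) :
  (forall l, saturated h (E l)) -> forall l, saturated h (disjointify l).
Proof.
move=> hE; have hX l : saturated h (exclusive l) by apply: saturatedD => //; apply: saturated_big.
by move=> l; rewrite /disjointify; case: ifP => _ //; apply/saturatedC/saturated_big.
Qed.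

(* A point where the partition [B] and the family [E] agree on every cell lies in
   exactly one [E l], hence in the same cells of [B] and of [disjointify E]. *)
Lemma disjointify_setY_sub (B : 'I_m.+1 -> set T) : finpart setT B ->
  forall l, B l `+` disjointify l `<=` \big[setU/set0]_l' (B l' `+` E l').
Proof.
move=> [_ covB disB] l w Hw; apply: contrapT => Hn.
have BE l' : B l' w <-> E l' w.
  by split => h; apply: contrapT => h'; apply: Hn; apply/bigsetU_memP; exists l';
    split => //; [left|right].
have [l0 Bl0] := covB w.
have BP l' : B l' w <-> l' = l0.
  split => [Bl'|->] //; apply/eqP; apply: contraT => ne.
  by have := disB _ _ ne => /seteqP [H _]; case: (H w (conj Bl' Bl0)).
have XP l' : exclusive l' w <-> l' = l0.
  rewrite exclusiveP; split => [[/BE /BP //]|->]; split; first by apply/BE/BP.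
  by move=> l'' ne /BE /BP E''; move: ne; rewrite E'' eqxx.
have DP : disjointify l w <-> l = l0.
  rewrite /disjointify; case: (eqVneq l ord0) => [->|_]; last exact: XP.
  split => [nU|E0 /bigsetU_memP [l' [ne /XP E']]]; last by move: ne; rewrite E' -E0 eqxx.
  apply/eqP; apply: contraT => ne; exfalso; apply: nU; apply/bigsetU_memP.
  by exists l0; split; [rewrite eq_sym|apply/XP].
by case: Hw => [[/BP h1 []]|[/DP h1 []]]; [apply/DP|apply/BP].
Qed.

End disjointify.

Lemma finpart_disjointify {d : measure_display} {Omega : measurableType d}
    (m : nat) (E : 'I_m.+1 -> set Omega) :
  (forall l, measurable (E l)) -> finpart measurable (disjointify E).
Proof.
move=> mE; have mX l : measurable (exclusive E l).
  by apply: measurableD => //; apply: bigsetU_measurable.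
split.
- move=> l; rewrite /disjointify; case: ifP => _ //.
  by apply: measurableC; apply: bigsetU_measurable.
- move=> w; case: (pselect (exists2 l, l != ord0 & exclusive E l w)) => [[l ne Xw]|H].
    by exists l; rewrite /disjointify (negbTE ne).
  by exists ord0; rewrite /disjointify eqxx => /bigsetU_memP [l [ne Xw]]; apply: H; exists l.
- move=> a b ab; apply/seteqP; split => // w []; rewrite /disjointify.
  case: (eqVneq a ord0) => [ea|an0]; case: (eqVneq b ord0) => [eb|bn0].
  + by move: ab; rewrite ea eb eqxx.
  + by move=> nU Xb; apply: nU; apply/bigsetU_memP; exists b.
  + by move=> Xa nU; apply: nU; apply/bigsetU_memP; exists a.
  + by move=> /exclusiveP [Ea _] /exclusiveP [_ h]; exact: h a ab Ea.
Qed.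

Section mutual_info_independent.
Context {R : realType} {d : measure_display} {Omega : measurableType d}.
Variable P : probability Omega R.
Variables (F0 G0 : set (set Omega)).
Hypothesis FM : <<s F0 >> `<=` measurable.
Hypothesis GM : <<s G0 >> `<=` measurable.

Definition rect_saturated (L : finType) (B : L -> set Omega) :=
  exists (I J : finType) (f : I -> set Omega) (g : J -> set Omega),
    [/\ finpart <<s F0 >> f, finpart <<s G0 >> g & forall l, saturated (meet_part f g) (B l)].

Lemma rect_partition_approx (m : nat) (B : 'I_m.+1 -> set Omega) (e : R) :
  finpart <<s (<<s F0 >> `|` <<s G0 >>) >> B -> 0 < e ->
  exists B' : 'I_m.+1 -> set Omega,
    [/\ finpart measurable B', rect_saturated B' &
        forall X l, measurable X -> `|pr P (X `&` B l) - pr P (X `&` B' l)| <= m.+1%:R * e].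
Proof.
move=> pB e0; have [HB _ _] := pB.
have appB l := rect_approx_gen P FM GM (HB l).
have mB l : measurable (B l) by case: (appB l).
have /choice [E hE] : forall l, exists E, rect_alg F0 G0 E /\ pr P (B l `+` E) <= e.
  by move=> l; have [_ /(_ _ e0) [E ? ?]] := appB l; exists E.
have mE l : measurable (E l) by apply: (rect_alg_measurable FM GM); case: (hE l).
have [|I [J [f [g [pf pg sE]]]]] := @rect_alg_frame _ _ F0 G0 [seq E l | l <- enum 'I_m.+1].
  by move=> _ /mapP [l _ ->]; case: (hE l).
exists (disjointify E); split; first exact: finpart_disjointify.
  exists I, J, f, g; split => //.
  by apply: saturated_disjointify => l; apply: sE; apply: map_f; rewrite mem_enum.
move=> X l mX; have [mD _ _] := finpart_disjointify mE.
have mY l' : measurable (B l' `+` E l') by apply: measurableU; apply: measurableD.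
have mXBD : measurable ((X `&` B l) `+` (X `&` disjointify E l)).
  by apply: measurableU; apply: measurableD; apply: measurableI.
apply: le_trans (pr_setY_dist P (measurableI _ _ mX (mB l)) (measurableI _ _ mX (mD l))) _.
have sub : (X `&` B l) `+` (X `&` disjointify E l) `<=` \big[setU/set0]_l' (B l' `+` E l').
  apply: subset_trans _ (disjointify_setY_sub (E := E) (l := l) (finpart_sub (@subsetT _ _) pB)).
  move=> w [[[Xw Bw] nXD]|[[Xw Dw] nXB]]; [left|right]; split => // ?.
  - exact: nXD.
  - exact: nXB.
apply: le_trans (le_pr P mXBD (bigsetU_measurable _ _) sub) _ => //.
apply: le_trans (pr_bigsetU_le P mY) _.
apply: le_trans (ler_sum _ (fun l' _ => (hE l').2)) _.
by rewrite sumr_const card_ord -[_ *+ _]mulr_natl.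
Qed.

Variables (m : nat) (A : 'I_m -> set Omega).
Hypothesis mA : forall k, measurable (A k).
Hypothesis indA : forall k X Y, <<s F0 >> X -> <<s G0 >> Y ->
  pr P (A k `&` (X `&` Y)) = pr P (A k `&` X) * pr P Y.
Hypothesis indF : forall X Y, <<s F0 >> X -> <<s G0 >> Y ->
  pr P (X `&` Y) = pr P X * pr P Y.

(* Refining [B] to the cells [f i `&` g j] can only increase the sum, and the
   [g]-part of the cells then drops out by independence. *)
Lemma mi_sumT_saturated_le (A0 : set (set Omega)) (L : finType) (B : L -> set Omega) :
  is_fpart A0 A -> finpart measurable B -> rect_saturated B ->
  ((mi_sumT P A B)%:E <= mutual_info P A0 <<s F0 >>)%E.
Proof.
move=> pA pB [I [J [f [g [pf pg sB]]]]]; have pfg := finpart_measurable_meet FM GM pf pg.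
have [_ covB _] := pB.
apply: (@le_trans _ _ (mi_sumT P A (meet_part f g))%:E).
  rewrite lee_fin; apply: mi_sumT_refine => // c.
  case: (pselect (exists w, meet_part f g c w)) => [[w cw]|H].
    have [l Bl] := covB w; exists l.
    by case: (sB l c) => // H; have := H w cw.
  by have [l _] := covB point; exists l => w cw; exfalso; apply: H; exists w.
have [[Ff _ _] [Gg _ _]] := (pf, pg).
rewrite mi_sumT_meet_indep.
- exact: mi_sumT_le_mutual_info pA pf.
- exact: finpart_sub pg.
- by move=> k i j; apply: indA.
- by move=> i j; apply: indF.
Qed.

(* The partitions [Bs n] approximating [B] to within [1 / n.+1] have sums bounded by
   [I(A0; F0)], and these sums converge to that of [B]. *)
Lemma mi_sum_le_indep (A0 : set (set Omega)) (m' : nat) (B : 'I_m' -> set Omega) :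
  is_fpart A0 A -> is_fpart <<s (<<s F0 >> `|` <<s G0 >>) >> B ->
  ((mi_sum P A B)%:E <= mutual_info P A0 <<s F0 >>)%E.
Proof.
move=> pA [HB covB disB].
have pB : finpart <<s (<<s F0 >> `|` <<s G0 >>) >> B.
  split => // w; have : (\bigcup_(k in [set: 'I_m']) B k) w by rewrite covB.
  by case=> k _ Bk; exists k.
have mB l : measurable (B l) by case: (rect_approx_gen P FM GM (HB l)).
case: m' B {HB covB disB} pB mB => [|m'] B pB mB; first by case: pB => _ /(_ point) [[]].
have inv_gt0 n : 0 < n.+1%:R^-1 :> R by rewrite invr_gt0.
have /choice [Bs hBs] n := rect_partition_approx pB (inv_gt0 n).
have le_mi n : ((mi_sumT P A (Bs n))%:E <= mutual_info P A0 <<s F0 >>)%E.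
  by have [pBs sBs _] := hBs n; exact: mi_sumT_saturated_le pA pBs sBs.
have : mi_sumT P A (Bs n) @[n --> \oo] --> mi_sum P A B.
  apply: (@mi_sumT_cvg _ _ _ _ _ _ _ _ _ m'.+1%:R) => // [n l|n X l mX].
    by have [[] ? _ _ _ _] := hBs n.
  by have [_ _ /(_ X l mX)] := hBs n.
case: (mutual_info P A0 <<s F0 >>) le_mi => [r| |] le_mi cv.
- rewrite lee_fin; apply: (closed_cvg _ (@closed_le _ r) _ _ cv).
  by apply: nearW => n; have := le_mi n; rewrite lee_fin.
- exact: leey.
- by have := le_mi 0%N.
Qed.

End mutual_info_independent.

Lemma mutual_info_indep {R : realType} {d : measure_display} {Omega : measurableType d}
    (P : probability Omega R) (A0 F0 G0 : set (set Omega)) :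
  A0 `<=` measurable -> <<s F0 >> `<=` measurable -> <<s G0 >> `<=` measurable ->
  (forall a X Y, A0 a -> <<s F0 >> X -> <<s G0 >> Y ->
     pr P (a `&` (X `&` Y)) = pr P (a `&` X) * pr P Y) ->
  (forall X Y, <<s F0 >> X -> <<s G0 >> Y -> pr P (X `&` Y) = pr P X * pr P Y) ->
  mutual_info P A0 <<s (<<s F0 >> `|` <<s G0 >>) >> = mutual_info P A0 <<s F0 >>.
Proof.
move=> AM FM GM indA indF; apply/eqP; rewrite eq_le; apply/andP; split.
  apply: ge_ereal_sup => _ [m [m' [A [B [pA pB ->]]]]].
  have [A0A _ _] := pA.
  by apply: (mi_sum_le_indep FM GM (A := A)) => // [k|k X Y FX GY]; [exact: AM|exact: indA].
apply: le_ereal_sup => _ [m [m' [A [B [pA [FB cB dB] ->]]]]].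
exists m, m', A, B; split => //; split => // l.
by apply: sub_gen_smallest; left.
Qed.

Definition gen_sets {R : realType} {d : measure_display} {Omega : measurableType d} {I : Type}
  (D : set I) (X : I -> Omega -> R) : set (set Omega) :=
  [set E | exists k, D k /\ exists B : set R, measurable B /\ E = X k @^-1` B].

Lemma indep_lambda_system {R : realType} {d : measure_display} {Omega : measurableType d}
    (P : probability Omega R) (H : set Omega) : measurable H ->
  lambda_system setT [set E | measurable E /\ pr P (E `&` H) = pr P E * pr P H].
Proof.
move=> mH; split => //.
- by split => //; rewrite setTI prT mul1r.
- move=> A B BA [mA hA] [mB hB]; split; first exact: measurableD.
  have := pr_setID P mA mB; rewrite (setIidr BA) => eA.
  have := pr_setID P (measurableI _ _ mA mH) mB; rewrite setIAC (setIidr BA) hA hB.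
  by rewrite !setDE setIAC; nra.
- move=> F nd hF; have mF n : measurable (F n) by case: (hF n).
  split; first exact: bigcup_measurable.
  have ndH : {homo (fun n => F n `&` H) : a b / (a <= b)%N >-> (a <= b)%O}.
    by move=> a b ab; apply/subsetPset; apply: setSI; apply/subsetPset; exact: nd.
  have := pr_nondecreasing_cvg (P := P) (fun n => measurableI _ _ (mF n) mH) ndH.
  rewrite -setI_bigcupl => c1; apply: (cvg_unique (@Rhausdorff R) c1).
  rewrite /=; under eq_fun do rewrite (proj2 (hF _)).
  by apply: cvgMl; exact: pr_nondecreasing_cvg.
Qed.

Section mutual_independence.
Context {R : realType} {d : measure_display} {Omega : measurableType d}.
Variable P : probability Omega R.
Variables (I : choiceType) (D : set I) (X : I -> Omega -> R).
Hypothesis mX : forall k, measurable_fun setT (X k).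
Hypothesis indep : mutually_independent P D X.

Lemma gen_sets_measurable (D1 : set I) : <<s gen_sets D1 X >> `<=` measurable.
Proof.
apply: smallest_sub; first exact: sigma_algebra_measurable.
by move=> _ [k [_ [B [mB ->]]]]; rewrite -[_ @^-1` _]setTI; exact: mX.
Qed.

Definition cylinder (J : seq I) (Bf : I -> set R) := \bigcap_(k in [set` J]) X k @^-1` Bf k.

Definition cylinders (D1 : set I) : set (set Omega) :=
  [set E | exists J Bf, [/\ uniq J, (forall k, k \in J -> D1 k),
     (forall k, measurable (Bf k)) & E = cylinder J Bf]].

Lemma cylinder_measurable J Bf : (forall k, measurable (Bf k)) -> measurable (cylinder J Bf).
Proof.
move=> mB; rewrite /cylinder bigcap_seq; apply: bigsetI_measurable => k _.
by rewrite -[_ @^-1` _]setTI; exact: mX.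
Qed.

Lemma cylinders_setI (D1 : set I) : setI_closed (cylinders D1).
Proof.
move=> _ _ [J1 [B1 [u1 d1 m1 ->]]] [J2 [B2 [u2 d2 m2 ->]]].
pose B12 k := (if k \in J1 then B1 k else setT) `&` (if k \in J2 then B2 k else setT).
exists (undup (J1 ++ J2)), B12; split.
- exact: undup_uniq.
- by move=> k; rewrite mem_undup mem_cat => /orP [/d1|/d2].
- by move=> k; apply: measurableI; case: ifP.
apply/seteqP; split => w.
  move=> [h1 h2] k; rewrite /= mem_undup mem_cat /B12.
  by move=> _; split; case: ifP => // kJ; [exact: h1|exact: h2].
move=> h; split => k /= kJ; have /= := h k; rewrite mem_undup mem_cat kJ ?orbT /B12 kJ.
  by move=> /(_ isT) [].
by move=> /(_ isT) [].
Qed.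

Lemma g_sigma_cylinders (D1 : set I) : <<s gen_sets D1 X >> = <<s cylinders D1 >>.
Proof.
apply/seteqP; split; apply: smallest_sub; try exact: smallest_sigma_algebra.
  move=> _ [k [Dk [B [mB ->]]]]; apply: sub_gen_smallest.
  exists [:: k], (fun _ => B); split => //; first by move=> j; rewrite inE => /eqP ->.
  apply/seteqP; split => w; first by move=> Bw j; rewrite /= inE => /eqP ->.
  by move=> /(_ k); rewrite /= inE eqxx => /(_ isT).
move=> _ [J [Bf [u dJ mB ->]]]; rewrite /cylinder bigcap_seq big_seq.
apply: (big_ind <<s gen_sets D1 X >>); [exact: g_sigmaT|exact: g_sigmaI|].
by move=> k kJ; apply: sub_gen_smallest; exists k; split; [apply: dJ|exists (Bf k)].
Qed.

Variables (D1 D2 : set I).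
Hypotheses (D1D : D1 `<=` D) (D2D : D2 `<=` D) (D12 : D1 `&` D2 `<=` set0).

Lemma cylinders_indep E H : cylinders D1 E -> cylinders D2 H ->
  pr P (E `&` H) = pr P E * pr P H.
Proof.
move=> [J1 [B1 [u1 d1 m1 ->]]] [J2 [B2 [u2 d2 m2 ->]]].
have J12 k : k \in J1 -> k \notin J2.
  by move=> /d1 kD1; apply/negP => /d2 kD2; exact: (D12 (conj kD1 kD2)).
pose Bf k := if k \in J1 then B1 k else B2 k.
have uJ : uniq (J1 ++ J2).
  rewrite cat_uniq u1 u2 /= andbT; apply/hasPn => k kJ2; apply/negP => kJ1.
  by have := J12 k kJ1; rewrite kJ2.
have -> : cylinder J1 B1 `&` cylinder J2 B2 = cylinder (J1 ++ J2) Bf.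
  apply/seteqP; split => w.
    by move=> [h1 h2] k; rewrite /= mem_cat /Bf; case: ifP => /= [kJ1 _|_]; [apply: h1|apply: h2].
  move=> h; split => k kJ; have /= := h k; rewrite mem_cat kJ ?orbT /Bf ?kJ; first exact.
  by rewrite (negbTE (contraL (@J12 k) _)) //= => /(_ isT).
have DJ k : k \in J1 ++ J2 -> D k by rewrite mem_cat => /orP [/d1/D1D|/d2/D2D].
have mBf k : measurable (Bf k) by rewrite /Bf; case: ifP.
rewrite /cylinder (indep uJ DJ mBf) (indep u1 (fun k kJ => D1D (d1 k kJ)) m1).
rewrite (indep u2 (fun k kJ => D2D (d2 k kJ)) m2).
rewrite big_cat /=; congr (_ * _); rewrite !big_seq; apply: eq_bigr => k kJ; rewrite /Bf.
  by rewrite kJ.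
by rewrite (negbTE (contraL (@J12 k) _)) //.
Qed.

(* Dynkin's pi-lambda theorem, applied once on each side. *)
Lemma sigma_gen_indep E H : sigma_gen D1 X E -> sigma_gen D2 X H ->
  pr P (E `&` H) = pr P E * pr P H.
Proof.
have cylinders_meas D' : cylinders D' `<=` measurable.
  by move=> _ [J [Bf [_ _ mB ->]]]; apply: cylinder_measurable.
have indep_cyl H' : cylinders D2 H' -> forall E', <<s gen_sets D1 X >> E' ->
    pr P (E' `&` H') = pr P E' * pr P H'.
  move=> cH E'; rewrite g_sigma_cylinders => sE.
  have sub : cylinders D1 `<=` [set E | measurable E /\ pr P (E `&` H') = pr P E * pr P H'].
    by move=> E'' cE; split; [exact: cylinders_meas cE|exact: cylinders_indep cE cH].
  by have [] := lambda_system_subset (@cylinders_setI D1)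
    (indep_lambda_system P (cylinders_meas _ _ cH)) sub (fun _ _ => @subsetT _ _) sE.
move=> sE; rewrite /sigma_gen g_sigma_cylinders => sH; rewrite setIC mulrC.
have mE : measurable E by apply: gen_sets_measurable sE.
have sub : cylinders D2 `<=` [set H | measurable H /\ pr P (H `&` E) = pr P H * pr P E].
  by move=> H' cH; split; [exact: cylinders_meas cH|rewrite setIC mulrC; exact: indep_cyl cH _ sE].
by have [] := lambda_system_subset (@cylinders_setI D2) (indep_lambda_system P mE) sub
  (fun _ _ => @subsetT _ _) sH.
Qed.

End mutual_independence.

Section measurable_wrt_generated.
Context {R : realType} {d : measure_display} {Omega : measurableType d}.

Definition gmeas (G : set (set Omega)) (f : Omega -> R) :=
  measurable_fun (setT : set (g_sigma_algebraType G)) f.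

Variable G : set (set Omega).

Lemma gmeas_preimage f B : gmeas G f -> measurable B -> <<s G >> (f @^-1` B).
Proof. by move=> h mB; have := h measurableT B mB; rewrite setTI. Qed.

Lemma gmeasD f g : gmeas G f -> gmeas G g -> gmeas G (fun w => f w + g w).
Proof. exact: (@measurable_funD _ (g_sigma_algebraType G)). Qed.

Lemma gmeasB f g : gmeas G f -> gmeas G g -> gmeas G (fun w => f w - g w).
Proof. exact: (@measurable_funB _ (g_sigma_algebraType G)). Qed.

Lemma gmeasM f g : gmeas G f -> gmeas G g -> gmeas G (fun w => f w * g w).
Proof. exact: (@measurable_funM _ (g_sigma_algebraType G)). Qed.

Lemma gmeas_cst (r : R) : gmeas G (fun _ => r).
Proof. exact: (@measurable_cst _ _ (g_sigma_algebraType G)). Qed.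

Lemma gmeasZ (r : R) f : gmeas G f -> gmeas G (fun w => r * f w).
Proof. by move=> h; apply: gmeasM => //; apply: gmeas_cst. Qed.

Lemma gmeas_sum (K : Type) (s : seq K) (Q : pred K) (h : K -> Omega -> R) :
  (forall k, Q k -> gmeas G (h k)) -> gmeas G (fun w => \sum_(k <- s | Q k) h k w).
Proof.
move=> hh; elim: s => [|k s IH]; first by under eq_fun do rewrite big_nil; apply: gmeas_cst.
under eq_fun do rewrite big_cons.
by case: (boolP (Q k)) => Qk //; apply: gmeasD => //; apply: hh.
Qed.

Lemma gmeas_gen_sets (I : Type) (D : set I) (X : I -> Omega -> R) k :
  D k -> gmeas (gen_sets D X) (X k).
Proof.
by move=> Dk _ B mB; rewrite setTI; apply: sub_gen_smallest; exists k; split => //; exists B.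
Qed.

Lemma gmeas_sub (G' : set (set Omega)) f : G `<=` <<s G' >> -> gmeas G f -> gmeas G' f.
Proof.
move=> GG' hf _ B mB; rewrite setTI; move: (gmeas_preimage hf mB).
by apply: smallest_sub => //; exact: smallest_sigma_algebra.
Qed.

Lemma sigma_gen_sub (I : Type) (D : set I) (X : I -> Omega -> R) :
  (forall k, D k -> gmeas G (X k)) -> sigma_gen D X `<=` <<s G >>.
Proof.
move=> h; apply: smallest_sub; first exact: smallest_sigma_algebra.
by move=> _ [k [Dk [B [mB ->]]]]; apply: gmeas_preimage => //; apply: h.
Qed.

End measurable_wrt_generated.

Lemma in_horizon_pred tmax t : in_horizon tmax t.+1 -> in_horizon tmax t.
Proof. by case: tmax => //= T; apply: ltnW. Qed.

Section adqsp_view.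
Context {R : realType} {d : measure_display} {Omega : measurableType d}.
Variable P : probability Omega R.
Variables (n : nat) (adj : rel 'I_n) (i : 'I_n) (c theta : R) (tmax : option nat)
  (S : 'I_n -> Omega -> R) (Z0 : 'I_n -> 'I_n -> Omega -> R)
  (N : nat -> 'I_n -> 'I_n -> Omega -> R).
Hypotheses (adj_sym : symmetric adj) (adj_irr : irreflexive adj).
Hypotheses (c_gt0 : 0 < c) (theta_lt1 : theta < 1).
Hypothesis mS : forall j, measurable_fun [set: Omega] (S j).
Hypothesis mZ : forall j k, measurable_fun [set: Omega] (Z0 j k).
Hypothesis mN : forall t j k, measurable_fun [set: Omega] (N t j k).

Local Notation index := (('I_n + ('I_n * 'I_n)) + (nat * 'I_n * 'I_n))%type.

Definition all_vars : set index := [set x | match x with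
  | inl (inl _) => True
  | inl (inr (j, k)) => adj j k
  | inr (t, j, k) => [/\ adj j k, (1 <= t)%N & in_horizon tmax t]
  end].

Definition var_val (x : index) : Omega -> R := match x with
  | inl (inl j) => S j
  | inl (inr (j, k)) => Z0 j k
  | inr (t, j, k) => N t j k
  end.

Hypothesis indep : mutually_independent P all_vars var_val.

Definition adv_dom : set index := [set x | match x with
  | inl (inl j) => j != i
  | inl (inr (j, k)) => adj j k /\ ((j != i) || (k != i))
  | inr (t, j, k) => [/\ adj j k, (1 <= t)%N & in_horizon tmax t]
  end].

Definition adv_val (x : index) (w : Omega) : R := match x with
  | inl (inl j) => S j w
  | inl (inr (j, k)) => Z0 j k w
  | inr (t, j, k) => dzhat adj c theta (fun l => S l w) (fun a b => Z0 a b w)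
                       (fun u a b => N u a b w) t j k
  end.

Definition cik (k : 'I_n) : R :=
  (1 + c * (degree adj i)%:R) / ((1 - theta) * 2 * c * Bsgn i k).

Definition noisy_dom : set ('I_n * nat) :=
  [set y | [/\ adj i y.1, (1 <= y.2)%N & in_horizon tmax y.2]].

Definition noisy_val (y : 'I_n * nat) (w : Omega) : R := S i w + cik y.1 * N y.2 y.1 i w.

Definition own_vars : set index := [set x | match x with
  | inl (inl j) => j = i
  | inl (inr _) => False
  | inr (t, j, k) => [/\ adj j k, (1 <= t)%N, in_horizon tmax t & k = i]
  end].

Definition other_vars : set index := [set x | match x with
  | inl (inl j) => j != i
  | inl (inr (j, k)) => adj j k
  | inr (t, j, k) => [/\ adj j k, (1 <= t)%N, in_horizon tmax t & k != i]
  end].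

Definition zh t j k (w : Omega) : R :=
  zhat adj c theta (fun l => S l w) (fun a b => Z0 a b w) (fun u a b => N u a b w) t j k.

Definition zsum t k (w : Omega) : R := \sum_(l | adj k l) Bsgn k l * zh t k l w.

(* Weight of the private value [S k] in the message from [k] to [j]. *)
Definition gain (k j : 'I_n) : R := (1 - theta) * (2 * c * Bsgn k j) / (1 + c * (degree adj k)%:R).

Definition zterm t j k (w : Omega) : R :=
  theta * zh t j k w + (1 - theta) * zh t k j w - gain k j * zsum t k w - zh t j k w.

Lemma zhS t j k w : zh t.+1 j k w = zh t j k w + adv_val (inr (t.+1, j, k)) w.
Proof. by []. Qed.

Lemma dzhatE t j k w :
  adv_val (inr (t.+1, j, k)) w = zterm t j k w + gain k j * S k w + N t.+1 j k w.
Proof. by rewrite /= /dzhat /znew /xnew /zterm /gain /zsum /zh /=; ring. Qed.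

Lemma gain_cik j : gain i j * cik j = 1.
Proof.
have B0 : Bsgn i j != 0 :> R by rewrite /Bsgn; case: ifP; rewrite ?oppr_eq0 oner_neq0.
have den0 : 1 + c * (degree adj i)%:R != 0 by rewrite gt_eqF // ltr_pwDl // mulr_ge0 // ltW.
have theta1 : 1 - theta != 0 by rewrite subr_eq0 eq_sym lt_eqF.
by rewrite /gain /cik; field; rewrite B0 den0 theta1 gt_eqF.
Qed.

Lemma dzhat_ownE t j w :
  adv_val (inr (t.+1, j, i)) w = zterm t j i w + gain i j * noisy_val (j, t.+1) w.
Proof. by rewrite dzhatE /noisy_val mulrDr mulrA gain_cik mul1r addrA. Qed.

Lemma zterm_gmeas (G : set (set Omega)) t j k :
  (forall a b, adj a b -> gmeas G (zh t a b)) -> adj j k -> gmeas G (zterm t j k).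
Proof.
move=> hZ ajk; have akj : adj k j by rewrite adj_sym.
have hS : gmeas G (zsum t k).
  apply: (@gmeas_sum _ _ _ G _ _ _ (fun l w => Bsgn k l * zh t k l w)) => l akl.
  by apply: gmeasZ; apply: hZ.
apply: gmeasB; last exact: hZ.
by apply: gmeasB; [apply: gmeasD; apply: gmeasZ; exact: hZ|exact: gmeasZ].
Qed.

Definition noisy_other :=
  <<s gen_sets noisy_dom noisy_val >> `|` <<s gen_sets other_vars var_val >>.

Lemma noisy_gmeas y : noisy_dom y -> gmeas noisy_other (noisy_val y).
Proof.
move=> hy; apply: (gmeas_sub (G := gen_sets noisy_dom noisy_val)); last exact: gmeas_gen_sets.
by move=> E hE; apply: sub_gen_smallest; left; exact: sub_gen_smallest.
Qed.

Lemma other_gmeas x : other_vars x -> gmeas noisy_other (var_val x).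
Proof.
move=> hx; apply: (gmeas_sub (G := gen_sets other_vars var_val)); last exact: gmeas_gen_sets.
by move=> E hE; apply: sub_gen_smallest; right; exact: sub_gen_smallest.
Qed.

Lemma dzhat_noisy_other t j k : in_horizon tmax t.+1 -> adj j k ->
  (forall a b, adj a b -> gmeas noisy_other (zh t a b)) ->
  gmeas noisy_other (adv_val (inr (t.+1, j, k))).
Proof.
move=> ht ajk hZ; have hz := zterm_gmeas hZ ajk.
case: (eqVneq k i) => [ki|ki].
  subst k; rewrite (funext (dzhat_ownE t j)); apply: gmeasD => //; apply: gmeasZ.
  by apply: noisy_gmeas; split; rewrite //= adj_sym.
rewrite (funext (dzhatE t j k)); apply: gmeasD; first apply: gmeasD => //.
  by apply: gmeasZ; apply: (other_gmeas (x := inl (inl k))).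
by apply: (other_gmeas (x := inr (t.+1, j, k))).
Qed.

Lemma zh_noisy_other t : in_horizon tmax t ->
  forall j k, adj j k -> gmeas noisy_other (zh t j k).
Proof.
elim: t => [_ j k ajk|t IH ht j k ajk]; first exact: (other_gmeas (x := inl (inr (j, k)))).
have IHt := IH (in_horizon_pred ht).
by rewrite (funext (zhS t j k)); apply: gmeasD; [exact: IHt|exact: dzhat_noisy_other].
Qed.

Lemma adv_noisy_other x : adv_dom x -> gmeas noisy_other (adv_val x).
Proof.
case: x => [[j|[j k]]|[[[|t] j] k]] /=.
- by move=> ji; apply: (other_gmeas (x := inl (inl j))).
- by move=> [ajk _]; apply: (other_gmeas (x := inl (inr (j, k)))).
- by case.
- move=> [ajk _ ht]; apply: dzhat_noisy_other => //.
  exact: zh_noisy_other (in_horizon_pred ht).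
Qed.

Let adv := gen_sets adv_dom adv_val.

Lemma adv_gmeas x : adv_dom x -> gmeas adv (adv_val x).
Proof. exact: gmeas_gen_sets. Qed.

Lemma adv_edge j k : adj j k -> adv_dom (inl (inr (j, k))).
Proof.
move=> ajk; split => //; case: (eqVneq j i) => [ji|] //=; subst j.
by apply: contraTneq ajk => ->; rewrite adj_irr.
Qed.

Lemma zh_adv t : in_horizon tmax t -> forall j k, adj j k -> gmeas adv (zh t j k).
Proof.
elim: t => [_ j k ajk|t IH ht j k ajk]; first exact: adv_gmeas (adv_edge ajk).
rewrite (funext (zhS t j k)); apply: gmeasD; first exact: IH (in_horizon_pred ht) _ _ ajk.
exact: (adv_gmeas (x := inr (t.+1, j, k))).
Qed.

(* Each message of [i], minus its part computable from earlier messages, is a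
   multiple of the corresponding noisy copy of [S i]. *)
Lemma noisy_adv y : noisy_dom y -> gmeas adv (noisy_val y).
Proof.
case: y => j [|t] [/= aij // _ ht]; have aji : adj j i by rewrite adj_sym.
have hz := zterm_gmeas (zh_adv (in_horizon_pred ht)) aji.
have -> : noisy_val (j, t.+1) =
    fun w => cik j * (adv_val (inr (t.+1, j, i)) w - zterm t j i w).
  by apply: funext => w; rewrite dzhat_ownE addrC addKr mulrA (mulrC (cik j)) gain_cik mul1r.
by apply: gmeasZ; apply: gmeasB => //; apply: (adv_gmeas (x := inr (t.+1, j, i))).
Qed.

Lemma other_adv x : other_vars x -> gmeas adv (var_val x).
Proof.
case: x => [[j|[j k]]|[[[|t] j] k]] /=.
- by move=> ji; apply: (adv_gmeas (x := inl (inl j))).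
- by move=> ajk; exact: adv_gmeas (adv_edge ajk).
- by case.
move=> [ajk _ ht ki]; have akj : adj k j by rewrite adj_sym.
have hz := zterm_gmeas (zh_adv (in_horizon_pred ht)) ajk.
have -> : N t.+1 j k = fun w => adv_val (inr (t.+1, j, k)) w - zterm t j k w - gain k j * S k w.
  by apply: funext => w; rewrite dzhatE; ring.
apply: gmeasB; last by apply: gmeasZ; apply: (adv_gmeas (x := inl (inl k))).
by apply: gmeasB => //; apply: (adv_gmeas (x := inr (t.+1, j, k))).
Qed.

Lemma sigma_adv_noisy_other : sigma_gen adv_dom adv_val = <<s noisy_other >>.
Proof.
apply/seteqP; split; first exact: sigma_gen_sub adv_noisy_other.
apply: smallest_sub; first exact: smallest_sigma_algebra.
by move=> E [] hE; move: E hE; apply: sigma_gen_sub; [exact: noisy_adv|exact: other_adv].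
Qed.

Lemma mutual_info_adv_noisy :
  mutual_info P (sigma_rv (S i)) (sigma_gen adv_dom adv_val) =
  mutual_info P (sigma_rv (S i)) (sigma_gen noisy_dom noisy_val).
Proof.
have mX x : measurable_fun setT (var_val x).
  by case: x => [[j|[j k]]|[[t j] k]]; [exact: mS|exact: mZ|exact: mN].
have own_all : own_vars `<=` all_vars by case => [[j|[j k]]|[[t j] k]] //= [].
have other_all : other_vars `<=` all_vars by case => [[j|[j k]]|[[t j] k]] //= [].
have own_other : own_vars `&` other_vars `<=` set0.
  by move=> [[j|[j k]]|[[t j] k]] [] //= => [->|[_ _ _ ->] [_ _ _]]; rewrite eqxx.
have Si_own : sigma_rv (S i) `<=` sigma_gen own_vars var_val.
  by apply: sigma_gen_sub => -[] _; exact: (gmeas_gen_sets (k := inl (inl i))).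
have noisy_own : sigma_gen noisy_dom noisy_val `<=` sigma_gen own_vars var_val.
  apply: sigma_gen_sub => -[k t] [/= aik t1 ht]; apply: gmeasD.
    exact: (gmeas_gen_sets (k := inl (inl i))).
  by apply: gmeasZ; apply: (gmeas_gen_sets (k := inr (t, k, i))); split; rewrite // adj_sym.
have own_meas : sigma_gen own_vars var_val `<=` measurable by exact: gen_sets_measurable.
have indep_other := sigma_gen_indep mX indep own_all other_all own_other.
rewrite sigma_adv_noisy_other; apply: mutual_info_indep.
- by move=> E /Si_own /own_meas.
- by move=> E /noisy_own /own_meas.
- exact: gen_sets_measurable.
- by move=> a X Y /Si_own ha /noisy_own hX hY; rewrite setIA; apply: indep_other => //;
    apply: g_sigmaI.
- by move=> X Y /noisy_own hX hY; apply: indep_other.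
Qed.

End adqsp_view.

Theorem theorem3
  (R : realType) (d : measure_display) (Omega : measurableType d)
  (P : probability Omega R)
  (n : nat) (adj : rel 'I_n) (i : 'I_n)
  (c theta sigmaz Delta0 gamma Deltamin : R) (tmax : option nat)
  (S : 'I_n -> Omega -> R) (Z0 : 'I_n -> 'I_n -> Omega -> R)
  (N : nat -> 'I_n -> 'I_n -> Omega -> R) :
  simple_graph adj -> connected_graph adj ->
  0 < c -> 0 <= theta < 1 -> 0 < sigmaz -> 0 < Delta0 -> 0 < gamma < 1 ->
  0 < Deltamin -> tmax <> Some 0%N ->
  (forall j, measurable_fun [set: Omega] (S j)) ->
  (forall j k, measurable_fun [set: Omega] (Z0 j k)) ->
  (forall t j k, measurable_fun [set: Omega] (N t j k)) ->
  mutually_independent P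
    [set x | match x with
             | inl (inl _) => True
             | inl (inr (j, k)) => adj j k
             | inr (t, j, k) => [/\ adj j k, (1 <= t)%N & in_horizon tmax t]
             end]
    (fun x => match x with
              | inl (inl j) => S j
              | inl (inr (j, k)) => Z0 j k
              | inr (t, j, k) => N t j k
              end) ->
  (* Z_{j|k}^(0) ~ N(0, sigmaz^2) *)
  (forall j k, adj j k -> forall A, measurable A ->
     P (Z0 j k @^-1` A) = normal_prob 0 sigmaz A) ->
  (* N_{j|k}^(t) ~ Uniform[-Delta^(t)/2, Delta^(t)/2] *)
  (forall t j k, adj j k -> (1 <= t)%N -> in_horizon tmax t ->
     forall A, measurable A ->
     P (N t j k @^-1` A) =
       (((qstep gamma Delta0 Deltamin t)^-1)%:E *
        lebesgue_measure (A `&` `[(- (qstep gamma Delta0 Deltamin t / 2))%R,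
                                    (qstep gamma Delta0 Deltamin t / 2)%R]))%E) ->
  let corrupt := fun j : 'I_n => j != i in
  (* adversary view O *)
  let O_dom := [set x : ('I_n + ('I_n * 'I_n)) + (nat * 'I_n * 'I_n) |
                match x with
                | inl (inl j) => corrupt j
                | inl (inr (j, k)) => adj j k /\ (corrupt j || corrupt k)
                | inr (t, j, k) => [/\ adj j k, (1 <= t)%N & in_horizon tmax t]
                end] in
  let O_val := fun (x : ('I_n + ('I_n * 'I_n)) + (nat * 'I_n * 'I_n)) (w : Omega) =>
                match x with
                | inl (inl j) => S j w
                | inl (inr (j, k)) => Z0 j k w
                | inr (t, j, k) =>
                    dzhat adj c theta (fun l => S l w) (fun a b => Z0 a b w)
                          (fun u a b => N u a b w) t j k
                end in
  let cik := fun k : 'I_n =>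
               (1 + c * (degree adj i)%:R) / ((1 - theta) * 2 * c * Bsgn i k) in
  let T_dom := [set y : 'I_n * nat |
                [/\ adj i y.1, (1 <= y.2)%N & in_horizon tmax y.2]] in
  let T_val := fun (y : 'I_n * nat) (w : Omega) => S i w + cik y.1 * N y.2 y.1 i w in
  mutual_info P (sigma_rv (S i)) (sigma_gen O_dom O_val) =
  mutual_info P (sigma_rv (S i)) (sigma_gen T_dom T_val).
Proof.
move=> [adj_sym adj_irr] _ c_gt0 /andP [_ theta_lt1] _ _ _ _ _ mS mZ mN indep _ _.
move=> corrupt adv_dom adv_val cik noisy_dom noisy_val.
exact: (mutual_info_adv_noisy i adj_sym adj_irr c_gt0 theta_lt1 mS mZ mN indep).
Qed.
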